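(* Let $n\geq 2$, let $a,b$ be integers with $1\leq a<b\leq n$, and let $\sigma$ be an $(n-1)$-permutation. Then there exists a u-p-word for $n$-permutations of the form $\Diamond_{a,b}u_2u_3\cdots u_N$ with $\mathrm{red}(u_2u_3\cdots u_n)=\sigma$ if and only if either ($a=1$ and $\sigma=12\cdots(n-1)$) or ($b=n$ and $\sigma=(n-1)(n-2)\cdots 1$).
   Context: An $n$-permutation is a permutation $\pi_1\cdots\pi_n$ of $\{1,\ldots,n\}$. For a word $w$ of distinct numbers, $\mathrm{red}(w)$ is obtained by replacing the $i$-th smallest letter by $i$. For integers $1\leq a<b\leq n$, $\Diamond_{a,b}$ is a restricted wildcard symbol. Consider a word $u=\Diamond_{a,b}u_2u_3\cdots u_N$ with $N\geq n$ and $u_2,\ldots,u_N$ positive integers. Its factors of length $n$ are $u_iu_{i+1}\cdots u_{i+n-1}$ for $1\leq i\leq N-n+1$ (with $u_1=\Diamond_{a,b}$); each factor's integer letters must be pairwise distinct. The first factor $\Diamond_{a,b}u_2\cdots u_n$ covers exactly the $n$-permutations $\pi$ with $\pi_1\in\{a,b\}$ and $\mathrm{red}(\pi_2\cdots\pi_n)=\mathrm{red}(u_2\cdots u_n)$ (i.e., the wildcard is replaced by a value that becomes the $a$-th or $b$-th smallest entry); a factor $u_i\cdots u_{i+n-1}$ with $i\geq 2$ covers only the $n$-permutation $\mathrm{red}(u_i\cdots u_{i+n-1})$. Such a word is a u-p-word for $n$-permutations if every $n$-permutation is covered by exactly one of its length-$n$ factors. *)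

From mathcomp Require Import all_boot.
Set Implicit Arguments. Unset Strict Implicit. Unset Printing Implicit Defensive.

Definition is_perm (n : nat) (p : seq nat) : bool := perm_eq p (iota 1 n).

Definition red (w : seq nat) : seq nat :=
  [seq (count (fun y => y < x) w).+1 | x <- w].

(* The word is  Diamond_{a,b} u_2 ... u_N ; we store only the tail
   t = u_2 ... u_N  (so size t = N - 1, with u_k = nth 0 t (k-2)). *)

(* Factors starting at positions i >= 2: u_i ... u_{i+n-1}, for 2 <= i <= N-n+1,
   i.e. the length-n windows of t starting at offsets 0 .. size t - n. *)
Definition later_factors (n : nat) (t : seq nat) : seq (seq nat) :=
  [seq take n (drop i t) | i <- iota 0 ((size t).+1 - n)].

(* The first factor Diamond_{a,b} u_2 ... u_n covers pi iff pi_1 \in {a,b} and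
   red(pi_2 ... pi_n) = red(u_2 ... u_n). *)
Definition first_covers (n a b : nat) (t pi : seq nat) : bool :=
  ((head 0 pi == a) || (head 0 pi == b)) && (red (behead pi) == red (take n.-1 t)).

Definition cover_count (n a b : nat) (t pi : seq nat) : nat :=
  first_covers n a b t pi + count (fun w => red w == pi) (later_factors n t).

Definition upword (n a b : nat) (t : seq nat) : Prop :=
  [/\ n.-1 <= size t,                       (* N >= n *)
      all (fun x => 0 < x) t,
      uniq (take n.-1 t),
      all uniq (later_factors n t)
    & forall pi, is_perm n pi -> cover_count n a b t pi = 1].

From mathcomp Require Import all_boot zify.
Set Implicit Arguments. Unset Strict Implicit. Unset Printing Implicit Defensive.

(* The n-permutations are the edges of the overlap graph on (n-1)-permutations:
   p goes from the pattern of its first n-1 letters to that of its last n-1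
   letters.  This graph is balanced (rotating p exchanges the two patterns) and
   connected, and its loops are the two monotone permutations.  The factors
   u_i ... u_(i+n-1), i >= 2, of a u-p-word form a walk starting at sigma that
   uses each edge once, except the two edges covered by the first factor (first
   letter a or b, then the pattern sigma), which both end at sigma.  Counting
   the edges at sigma, such a walk exists only if one of these two edges is a
   loop, which gives the two cases.  Conversely, removing that loop leaves a
   balanced connected graph; an Eulerian cycle of it, read from the other
   covered edge, is realised by a word. *)

Lemma size_red w : size (red w) = size w.
Proof. by rewrite size_map. Qed.

Lemma nth_red w i : i < size w ->
  nth 0 (red w) i = (count (fun y => y < nth 0 w i) w).+1.
Proof. by move=> hi; rewrite /red (nth_map 0). Qed.

Lemma count_ltn_mem x z w : x \in w -> x < z ->
  count (fun y => y < x) w < count (fun y => y < z) w.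
Proof.
elim: w => //= y w IH; rewrite inE => /orP[/eqP<-|xw] xz.
  have : count (fun y => y < x) w <= count (fun y => y < z) w.
    by apply: sub_count => u /= h; apply: ltn_trans h xz.
  rewrite ltnn xz; lia.
have := IH xw xz; case: (ltnP y x) => h1; case: (ltnP y z) => h2 /=; lia.
Qed.

Lemma ltn_nth_red w i j : i < size w -> j < size w ->
  (nth 0 (red w) i < nth 0 (red w) j) = (nth 0 w i < nth 0 w j).
Proof.
move=> hi hj; rewrite !nth_red // ltnS.
case: (ltnP (nth 0 w i) (nth 0 w j)) => h; first by apply: count_ltn_mem; rewrite ?mem_nth.
by apply/negbTE; rewrite -leqNgt; apply: sub_count => u /= h'; apply: leq_trans h' h.
Qed.

Lemma eq_red w w' : size w = size w' ->
  (forall i j, i < size w -> j < size w ->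
     (nth 0 w i < nth 0 w j) = (nth 0 w' i < nth 0 w' j)) ->
  red w = red w'.
Proof.
move=> hs hc; apply: (eq_from_nth (x0 := 0)); rewrite ?size_red // => i hi.
rewrite !nth_red -?hs //; congr S.
have hci j : j < size w -> (nth 0 w j < nth 0 w i) = (nth 0 w' j < nth 0 w' i).
  by move=> hj; apply: hc.
move: hci; set x := nth 0 w i; set x' := nth 0 w' i => hci.
rewrite -[in LHS](mkseq_nth 0 w) -[in RHS](mkseq_nth 0 w') /mkseq !count_map -hs.
by apply: eq_in_count => j; rewrite mem_iota => hj; rewrite /preim /= hci.
Qed.

Lemma red_eq_ltn w w' : red w = red w' -> size w = size w' /\
  (forall i j, i < size w -> j < size w ->
     (nth 0 w i < nth 0 w j) = (nth 0 w' i < nth 0 w' j)).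
Proof.
move=> h; have hs : size w = size w' by rewrite -(size_red w) h size_red.
split=> // i j hi hj.
by rewrite -ltn_nth_red // -[RHS]ltn_nth_red -?hs // h.
Qed.

Lemma red_map f w : {mono f : x y / x < y} -> red (map f w) = red w.
Proof.
move=> hf; apply: eq_red; rewrite size_map // => i j hi hj.
by rewrite !(nth_map 0) // hf.
Qed.

Lemma red_rev w : red (rev w) = rev (red w).
Proof. by rewrite /red map_rev; congr rev; apply: eq_map => x; rewrite count_rev. Qed.

Lemma red_take k w : red (take k (red w)) = red (take k w).
Proof.
apply: eq_red => [|i j]; first by rewrite !size_take size_red.
rewrite size_take size_red => hi hj.
have lt_min l : l < (if k < size w then k else size w) -> l < k /\ l < size w.
  by case: (ltnP k (size w)); lia.
have [hik hiw] := lt_min i hi; have [hjk hjw] := lt_min j hj.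
by rewrite !nth_take ?ltn_nth_red.
Qed.

Lemma red_drop k w : red (drop k (red w)) = red (drop k w).
Proof.
apply: eq_red => [|i j]; first by rewrite !size_drop size_red.
rewrite size_drop size_red => hi hj.
rewrite !nth_drop ltn_nth_red //; lia.
Qed.

Lemma red_idem w : red (red w) = red w.
Proof. by have := red_drop 0 w; rewrite !drop0. Qed.

Lemma red_cons x w x' w' : red w = red w' ->
  (forall j, j < size w -> (x < nth 0 w j) = (x' < nth 0 w' j)) ->
  x \notin w -> x' \notin w' -> red (x :: w) = red (x' :: w').
Proof.
move=> /red_eq_ltn [hs hc] hx nx nx'.
apply: eq_red => /=; first by rewrite hs.
case=> [|i] [|j] /= hi hj; rewrite ?ltnn ?hx ?hc //.
have n1 : nth 0 w i != x by apply: contraNneq nx => <-; apply: mem_nth.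
have n2 : nth 0 w' i != x' by apply: contraNneq nx' => <-; apply: mem_nth; rewrite -hs.
move: (hx i hi) n1 n2.
case: (ltngtP x (nth 0 w i)); case: (ltngtP x' (nth 0 w' i)) => //= *; lia.
Qed.

Lemma red_rcons w x w' x' : red w = red w' ->
  all (fun y => y < x) w -> all (fun y => y < x') w' ->
  red (rcons w x) = red (rcons w' x').
Proof.
move=> /red_eq_ltn [hs hc] /allP hw /allP hw'.
apply: eq_red; rewrite !size_rcons ?hs // => i j hi hj.
have bound k : k < size w -> nth 0 w k < x /\ nth 0 w' k < x'.
  by move=> hk; rewrite hw ?hw' ?mem_nth -?hs.
rewrite !nth_rcons -hs.
case: (ltngtP i (size w)) => hi'; case: (ltngtP j (size w)) => hj' //; try lia.
- exact: hc.
- by have [-> ->] := bound i hi'.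
- by have [h h'] := bound j hj'; apply/idP/idP; lia.
Qed.

Lemma is_perm_size m p : is_perm m p -> size p = m.
Proof. by move/perm_size; rewrite size_iota. Qed.

Lemma is_perm_mem m p x : is_perm m p -> (x \in p) = (0 < x <= m).
Proof. by move/perm_mem=> ->; rewrite mem_iota add1n ltnS. Qed.

Lemma is_perm_uniq m p : is_perm m p -> uniq p.
Proof. by move/perm_uniq->; apply: iota_uniq. Qed.

Lemma is_perm_range w : uniq w -> all (fun x => 0 < x <= size w) w ->
  is_perm (size w) w.
Proof.
move=> u /allP hw; apply: uniq_perm => //; first exact: iota_uniq.
have hsub : {subset w <= iota 1 (size w)}.
  by move=> x hx; rewrite mem_iota add1n ltnS hw.
by case: (uniq_min_size u hsub); rewrite ?size_iota.
Qed.

Lemma count_ltn_iota x m : count (fun y => y < x) (iota 1 m) = minn m x.-1.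
Proof.
elim: m => [|m IH]; first by rewrite min0n.
by rewrite -[m.+1]addn1 iotaD count_cat IH /=; case: (ltnP (1 + m) x) => /=; lia.
Qed.

Lemma count_ltn_perm m p x : is_perm m p -> x \in p ->
  count (fun y => y < x) p = x.-1.
Proof. by move=> hp; rewrite (permP hp) count_ltn_iota (is_perm_mem _ hp); lia. Qed.

Lemma red_perm m p : is_perm m p -> red p = p.
Proof.
move=> hp; rewrite -[RHS]map_id; apply/eq_in_map => x hx /=.
by rewrite (count_ltn_perm hp hx); move: hx; rewrite (is_perm_mem _ hp); lia.
Qed.

Lemma red_is_perm w : uniq w -> is_perm (size w) (red w).
Proof.
move=> u; rewrite -(size_red w); apply: is_perm_range.
  apply/(uniqP 0) => i j; rewrite !inE size_red => hi hj e.
  apply/eqP; apply: contraT => ne.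
  have wne : nth 0 w i != nth 0 w j by rewrite nth_uniq.
  have := ltn_nth_red hi hj; have := ltn_nth_red hj hi.
  by rewrite e ltnn; move: wne; case: ltngtP.
apply/allP => r /mapP [x hx ->]; rewrite size_red.
have : 0 < count (predC (fun y => y < x)) w.
  by rewrite -has_count; apply/hasP; exists x => //=; rewrite ltnn.
have := count_predC (fun y => y < x) w; lia.
Qed.

Lemma red_iota m k : 0 < m -> red (iota m k) = iota 1 k.
Proof.
move=> hm; rewrite -(prednK hm) -addn1 iotaDl red_map; last by move=> x y; lia.
by apply: (@red_perm k); rewrite /is_perm.
Qed.

(** * The overlap graph of permutations *)

Definition perms n := permutations (iota 1 n).

Lemma mem_perms n p : (p \in perms n) = is_perm n p.
Proof. exact: mem_permutations. Qed.

Lemma perms_uniq n : uniq (perms n).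
Proof. exact: permutations_uniq. Qed.

Definition src_pat n (p : seq nat) := red (take n.-1 p).
Definition dst_pat (p : seq nat) := red (behead p).

Definition bump h x := x + (h <= x).
Definition cons_pat h s := h :: map (bump h) s.

Lemma bump_mono h : {mono bump h : x y / x < y}.
Proof. by move=> x y; rewrite /bump; case: (leqP h x); case: (leqP h y) => /= *; lia. Qed.

Lemma src_pat_red n w : src_pat n (red w) = src_pat n w.
Proof. exact: red_take. Qed.

Lemma dst_pat_red w : dst_pat (red w) = dst_pat w.
Proof. by rewrite /dst_pat -!drop1 red_drop. Qed.

Lemma dst_cons_pat h s : dst_pat (cons_pat h s) = red s.
Proof. exact/red_map/bump_mono. Qed.

Lemma cons_pat_perm n h s : 0 < h <= n -> is_perm n.-1 s -> is_perm n (cons_pat h s).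
Proof.
move=> hh hs.
have hsz : size (cons_pat h s) = n by rewrite /= size_map (is_perm_size hs); lia.
rewrite -{1}hsz; apply: is_perm_range.
  have bump_inj : injective (bump h) by apply/incn_inj/leq_mono => x y; rewrite bump_mono.
  rewrite /= (map_inj_uniq bump_inj) (is_perm_uniq hs) andbT.
  by apply/mapP => -[x _]; rewrite /bump; case: leqP => /= *; lia.
rewrite hsz /= hh; apply/allP => y /mapP [x hx ->].
by move: hx; rewrite (is_perm_mem _ hs) /bump; case: leqP => /= *; lia.
Qed.

Lemma perm_cons_patE n p : 0 < n -> is_perm n p -> p = cons_pat (head 0 p) (dst_pat p).
Proof.
case: p => [|h r] hn hp; first by move: hn; rewrite -(is_perm_size hp).
have /andP [hr _] := is_perm_uniq hp.
rewrite /cons_pat /dst_pat /= /red -map_comp; congr cons.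
rewrite -[LHS]map_id; apply/eq_in_map => v hv /=.
have hv' : v \in h :: r by rewrite inE hv orbT.
have := count_ltn_perm hp hv'; have := is_perm_mem v hp; rewrite hv' /bump /=.
have : v != h by apply: contraNneq hr => <-.
by case: (ltngtP h v) => // *; case: leqP => /= *; lia.
Qed.

Lemma src_pat_rot n p : size p = n -> src_pat n (rot 1 p) = dst_pat p.
Proof.
case: p => [|x r] <- //.
by rewrite rot1_cons /src_pat /dst_pat -cats1 take_size_cat.
Qed.

Lemma count_src_dst_pat n (A : pred (seq nat)) :
  count (fun p => A (src_pat n p)) (perms n) = count (fun p => A (dst_pat p)) (perms n).
Proof.
have rot_perms : perm_eq (perms n) (map (rot 1) (perms n)).
  apply: uniq_perm; rewrite ?perms_uniq ?(map_inj_uniq (@rot_inj 1 _)) ?perms_uniq //.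
  move=> p; apply/idP/mapP => [hp | [q hq ->]].
    exists (rotr 1 p); rewrite ?rotrK //.
    by rewrite mem_perms /is_perm perm_rotr -/(is_perm n p) -mem_perms.
  by rewrite mem_perms /is_perm perm_rot -/(is_perm n q) -mem_perms.
rewrite (permP rot_perms) count_map; apply: eq_in_count => p.
by rewrite mem_perms => /is_perm_size hp /=; rewrite src_pat_rot.
Qed.

Lemma src_pat_perm n p : 0 < n -> is_perm n p -> is_perm n.-1 (src_pat n p).
Proof.
move=> hn hp; have := red_is_perm (take_uniq n.-1 (is_perm_uniq hp)).
by rewrite size_takel // (is_perm_size hp) leq_pred.
Qed.

(* Equality of both patterns says that each pair of consecutive letters of [p]
   compares like the next pair, so all of them compare like the first one. *)
Lemma loop_perm n p : 2 <= n -> is_perm n p -> src_pat n p = dst_pat p ->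
  p = iota 1 n \/ p = rev (iota 1 n).
Proof.
move=> hn hp /red_eq_ltn [_ hc]; have sz := is_perm_size hp.
have hc' i j : i.+1 < n -> j.+1 < n ->
    (nth 0 p i < nth 0 p j) = (nth 0 p i.+1 < nth 0 p j.+1).
  move=> hi hj; rewrite -!nth_behead -hc ?nth_take ?size_takel ?sz //; lia.
set c := nth 0 p 0 < nth 0 p 1.
have step i : i.+1 < n -> (nth 0 p i < nth 0 p i.+1) = c.
  by elim: i => [//|i IH] hi; rewrite -hc' ?IH //; lia.
have hne i : i.+1 < n -> nth 0 p i != nth 0 p i.+1.
  by move=> hi; rewrite nth_uniq ?sz ?(is_perm_uniq hp) //; lia.
have sorted_p (r : rel nat) :
    (forall i, i.+1 < n -> r (nth 0 p i) (nth 0 p i.+1)) -> sorted r p.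
  by move=> h; apply/(sortedP 0) => i; rewrite sz; apply: h.
case hcc: c in step.
  left; apply: (irr_sorted_eq ltn_trans ltnn); rewrite ?iota_ltn_sorted //.
  - by apply: sorted_p => i hi; rewrite step.
  - exact: perm_mem.
right; rewrite -[p]revK; congr rev.
apply: (irr_sorted_eq ltn_trans ltnn); rewrite ?iota_ltn_sorted //.
- rewrite rev_sorted; apply: sorted_p => i hi /=.
  by have := step i hi; have := hne i hi; case: ltngtP.
- by move=> x; rewrite mem_rev; apply: perm_mem.
Qed.

Lemma cons_pat_iota m : cons_pat 1 (iota 1 m) = iota 1 m.+1.
Proof.
rewrite /cons_pat /= -[in RHS](addn1 1) iotaDl; congr cons.
by apply/eq_in_map => x; rewrite mem_iota /bump => /andP [-> _]; rewrite addnC.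
Qed.

Lemma src_pat_iota m : src_pat m.+1 (iota 1 m.+1) = iota 1 m.
Proof. by rewrite /src_pat take_iota (minn_idPl (leqnSn m)) red_iota. Qed.

Lemma cons_pat_rev_iota m : cons_pat m.+1 (rev (iota 1 m)) = rev (iota 1 m.+1).
Proof.
rewrite /cons_pat -[in RHS](addn1 m) iotaD rev_cat /= add1n; congr cons.
rewrite -[RHS]map_id; apply/eq_in_map => x; rewrite mem_rev mem_iota /bump => h.
by rewrite [m.+1 <= x]leqNgt (_ : x < m.+1) ?addn0 //; lia.
Qed.

Lemma src_pat_rev_iota m : src_pat m.+1 (rev (iota 1 m.+1)) = rev (iota 1 m).
Proof.
by rewrite /src_pat /= rev_cons -cats1 take_size_cat ?size_rev ?size_iota // red_rev red_iota.
Qed.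

Lemma cons_pat_loopE n h s : 2 <= n -> 0 < h <= n -> is_perm n.-1 s ->
  src_pat n (cons_pat h s) = s <->
  (h = 1 /\ s = iota 1 n.-1) \/ (h = n /\ s = rev (iota 1 n.-1)).
Proof.
case: n => [//|m] hn hh /= hs; split => [hloop | ].
  have hp := cons_pat_perm hh hs.
  have hd : src_pat m.+1 (cons_pat h s) = dst_pat (cons_pat h s).
    by rewrite hloop dst_cons_pat (red_perm hs).
  case: (loop_perm hn hp hd) => e; rewrite e in hloop.
    by left; rewrite -hloop src_pat_iota; move: e; rewrite -cons_pat_iota => -[].
  by right; rewrite -hloop src_pat_rev_iota; move: e; rewrite -cons_pat_rev_iota => -[].
by case=> -[-> ->]; rewrite ?cons_pat_iota ?src_pat_iota ?cons_pat_rev_iota ?src_pat_rev_iota.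
Qed.

Lemma rcons_perm m u : is_perm m u -> is_perm m.+1 (rcons u m.+1).
Proof.
move=> hu; have hsz : size (rcons u m.+1) = m.+1 by rewrite size_rcons (is_perm_size hu).
rewrite -[X in is_perm X]hsz; apply: is_perm_range.
  by rewrite rcons_uniq (is_perm_uniq hu) (is_perm_mem _ hu) ltnn andbF.
apply/allP => x; rewrite hsz mem_rcons inE (is_perm_mem _ hu).
by case/orP => [/eqP -> | ] //; lia.
Qed.

Lemma src_pat_rcons m u x : size u = m -> src_pat m.+1 (rcons u x) = red u.
Proof. by move=> hu; rewrite /src_pat -cats1 take_size_cat. Qed.

(* [shift_pat m v k] drops the first [k] letters of [v] and appends [k] larger
   letters in increasing order; the edges [rcons (shift_pat m v k) m.+1] form a
   walk from [v] to the identity. *)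
Definition shift_pat m v k := red (drop k v ++ iota m.+1 k).

Lemma shift_pat_perm m v k : is_perm m v -> k <= m -> is_perm m (shift_pat m v k).
Proof.
move=> hv hk; have hsz : size (drop k v ++ iota m.+1 k) = m.
  by rewrite size_cat size_drop size_iota (is_perm_size hv); lia.
rewrite /shift_pat -{1}hsz; apply: red_is_perm.
rewrite cat_uniq drop_uniq ?(is_perm_uniq hv) ?iota_uniq //= andbT.
apply/hasPn => x; rewrite mem_iota => hx; apply/negP => /mem_drop.
by rewrite (is_perm_mem _ hv); lia.
Qed.

Lemma dst_pat_shift m v k : is_perm m v -> k < m ->
  dst_pat (rcons (shift_pat m v k) m.+1) = shift_pat m v k.+1.
Proof.
move=> hv hk; have hvs := is_perm_size hv.
have up := shift_pat_perm hv (ltnW hk); have us := is_perm_size up.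
have hw : dst_pat (shift_pat m v k) = red (drop k.+1 v ++ iota m.+1 k).
  by rewrite /shift_pat (drop_nth 0 (_ : k < size v)) ?hvs // dst_pat_red.
rewrite [shift_pat _ _ k.+1]/shift_pat.
have -> : drop k.+1 v ++ iota m.+1 k.+1 = rcons (drop k.+1 v ++ iota m.+1 k) (m.+1 + k).
  by rewrite rcons_cat -cats1 -[k.+1]addn1 iotaD.
case: (shift_pat m v k) up us hw => [|y w] up us hw; first by move: us hk => /= <-.
rewrite /dst_pat /=; apply: red_rcons => //.
- apply/allP => x hx; have : x \in y :: w by rewrite inE hx orbT.
  by rewrite (is_perm_mem _ up); lia.
- apply/allP => x; rewrite mem_cat mem_iota => /orP [/mem_drop | ]; last lia.
  by rewrite (is_perm_mem _ hv); lia.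
Qed.

Lemma edge_invariant_const n (A : pred (seq nat)) : 2 <= n ->
  {in perms n, forall p, A (src_pat n p) = A (dst_pat p)} ->
  forall v, is_perm n.-1 v -> A v = A (iota 1 n.-1).
Proof.
case: n => [//|m] hn hA v /= hv.
have step k : k < m -> A (shift_pat m v k) = A (shift_pat m v k.+1).
  move=> hk; have up := shift_pat_perm hv (ltnW hk).
  rewrite -(dst_pat_shift hv hk) -hA ?mem_perms ?rcons_perm //.
  by rewrite src_pat_rcons ?(red_perm up) ?(is_perm_size up).
have -> : v = shift_pat m v 0 by rewrite /shift_pat drop0 cats0 (red_perm hv).
have -> : iota 1 m = shift_pat m v m.
  by rewrite /shift_pat drop_oversize ?(is_perm_size hv) // red_iota.
suff /(_ m (leqnn m)) : forall k, k <= m -> A (shift_pat m v 0) = A (shift_pat m v k) by [].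
by elim=> [//|k IH] hk; rewrite IH 1?ltnW //; apply: step.
Qed.

(** * Eulerian cycles *)

Section Eulerian.

Variables (T V : eqType) (src dst : T -> V).

Definition linked (e f : T) := dst e == src f.

Definition balanced (E : seq T) :=
  forall v, count (fun e => src e == v) E = count (fun e => dst e == v) E.

Definition connected (E : seq T) := forall A : pred V,
  (exists2 g, g \in E & A (src g)) -> (exists2 g, g \in E & ~~ A (src g)) ->
  exists2 g, g \in E & A (src g) != A (dst g).

Lemma path_count_src_dst x p v : path linked x p ->
  count (fun e => src e == v) (x :: p) + (dst (last x p) == v) =
  count (fun e => dst e == v) (x :: p) + (src x == v).
Proof.
elim: p x => [|y p IH] x /=; first lia.
by case/andP => /eqP hxy /(IH y) /=; rewrite -hxy; lia.
Qed.

Lemma cycle_balanced c : cycle linked c -> balanced c.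
Proof.
case: c => // x p /= hc v.
by have := path_count_src_dst v hc; rewrite last_rcons /= -cats1 !count_cat /=; lia.
Qed.

Lemma count_uniq_sub (a : pred T) s1 s2 : uniq s1 -> {subset s1 <= s2} ->
  count a s1 <= count a s2.
Proof.
move=> u sub; rewrite -!size_filter; apply: uniq_leq_size; first exact: filter_uniq.
by move=> x; rewrite !mem_filter => /andP [-> /sub ->].
Qed.

Lemma balanced_out_edge (E : seq T) e p : balanced E -> uniq E ->
  path linked e p -> uniq (e :: p) -> {subset e :: p <= E} -> dst (last e p) != src e ->
  exists2 f, f \in E & (f \notin e :: p) && linked (last e p) f.
Proof.
move=> hb hu hp hq hs hop; set w := dst (last e p).
have := path_count_src_dst w hp; rewrite eqxx eq_sym (negbTE hop) addn0 => hpc.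
have hdE : count (fun e => dst e == w) (e :: p) <= count (fun e => src e == w) E.
  by rewrite hb; apply: count_uniq_sub.
suff /hasP [f hf hf'] : has (fun f => (f \notin e :: p) && (src f == w)) E.
  by exists f; rewrite // /linked eq_sym.
apply: contraT => /hasPn hn.
have hsub : {subset filter (fun f => src f == w) E <= filter (fun f => src f == w) (e :: p)}.
  move=> x; rewrite !mem_filter => /andP [hx xE]; rewrite hx /=.
  by have := hn x xE; rewrite hx andbT negbK.
have := uniq_leq_size (filter_uniq _ hu) hsub; rewrite !size_filter; lia.
Qed.

Lemma cycle_through (E : seq T) e : balanced E -> uniq E -> e \in E ->
  exists p, [/\ cycle linked (e :: p), uniq (e :: p) & {subset e :: p <= E}].
Proof.
move=> hb hu he.
suff grow p : path linked e p -> uniq (e :: p) -> {subset e :: p <= E} ->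
    exists p, [/\ cycle linked (e :: p), uniq (e :: p) & {subset e :: p <= E}].
  by apply: (grow [::]) => // x; rewrite inE => /eqP ->.
move: {2}(size E - size p) (leqnn (size E - size p)) => k.
elim: k p => [|k IH] p hk hp hq hs;
  (case: (boolP (dst (last e p) == src e)) => [hcl | hop];
     first by exists p; split => //=; rewrite rcons_path hp).
all: have [f hf /andP [hfn hfl]] := balanced_out_edge hb hu hp hq hs hop.
all: have hsz : size (f :: e :: p) <= size E by apply: uniq_leq_size => [|x];
       rewrite ?cons_uniq ?hfn // inE => /orP [/eqP -> | /hs].
  by move: hsz => /=; lia.
apply: (IH (rcons p f)).
- by rewrite size_rcons; move: hsz => /=; lia.
- by rewrite rcons_path hp.
- by rewrite -rcons_cons rcons_uniq hfn hq.
- by move=> x; rewrite -rcons_cons mem_rcons inE => /orP [/eqP -> | /hs].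
Qed.

Lemma count_diff (a : pred T) E c : uniq E -> uniq c -> {subset c <= E} ->
  count a E = count a c + count a [seq e <- E | e \notin c].
Proof.
move=> uE uc sub.
have /permP <- : perm_eq ([seq e <- E | e \in c] ++ [seq e <- E | e \notin c]) E.
  exact/permPl/perm_filterC.
rewrite count_cat.
congr (_ + _); apply/permP/uniq_perm; rewrite ?filter_uniq // => x.
by rewrite mem_filter; apply/andP/idP => [[] // | h]; split=> //; apply: sub.
Qed.

Lemma balanced_diff E c : uniq E -> uniq c -> {subset c <= E} ->
  balanced E -> balanced c -> balanced [seq e <- E | e \notin c].
Proof.
move=> uE uc sub hE hc v.
have := count_diff (fun e => src e == v) uE uc sub.
have := count_diff (fun e => dst e == v) uE uc sub.
rewrite hE hc; lia.
Qed.

Lemma cycle_cat x p y q : cycle linked (x :: p) -> cycle linked (y :: q) ->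
  src x = src y -> cycle linked (x :: p ++ y :: q).
Proof.
rewrite /= !rcons_path => /andP [hp hx] /andP [hq hy] hxy.
by move: hx hy; rewrite cat_path last_cat /= hp hq /linked hxy => -> ->.
Qed.

(* An edge leaving the vertices visited by [c] starts a new cycle at such a
   vertex; such an edge exists by connectivity and balance. *)
Lemma cycle_exit E c : connected E -> cycle linked c -> {subset c <= E} ->
  balanced [seq e <- E | e \notin c] -> c != [::] ->
  (exists2 f, f \in E & f \notin c) ->
  exists2 f, f \in [seq e <- E | e \notin c] & has (fun g => src g == src f) c.
Proof.
move=> hcn hc sub hbF nc [f0 hf0E hf0c].
set A := fun v => has (fun g => src g == v) c.
have A_dst g : g \in c -> A (dst g).
  move=> hg; apply/hasP; exists (next c g); first by rewrite mem_next.
  by rewrite eq_sym; apply: next_cycle hc hg.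
have hf0 : f0 \in [seq e <- E | e \notin c] by rewrite mem_filter hf0c.
case: (boolP (A (src f0))) => [|hA0]; first by exists f0.
have [g0 hg0] : exists g0, g0 \in c by case: (c) nc => // g0 c' _; exists g0; rewrite inE eqxx.
have [g hgE hg] : exists2 g, g \in E & A (src g) != A (dst g).
  apply: hcn; first by exists g0; [apply: sub | apply/hasP; exists g0].
  by exists f0.
have hgc : g \notin c.
  by apply: contra hg => hgc; rewrite (A_dst g hgc); apply/eqP/hasP; exists g.
have hgF : g \in [seq e <- E | e \notin c] by rewrite mem_filter hgc.
case: (boolP (A (src g))) => hsg; first by exists g.
have : 0 < count (fun e => dst e == dst g) [seq e <- E | e \notin c].
  by rewrite -has_count; apply/hasP; exists g.
have hdg : A (dst g) by move: hg; rewrite (negbTE hsg); case: (A (dst g)).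
by rewrite -hbF -has_count => /hasP [f hf /eqP hfs]; exists f; rewrite // hfs.
Qed.

Theorem eulerian_cycle E : balanced E -> uniq E -> connected E ->
  exists c, cycle linked c /\ perm_eq c E.
Proof.
move=> hb hu hcn; have [-> | [e0 he0]] : E = [::] \/ exists e0, e0 \in E.
  by case: (E) => [|e0 E']; [left | right; exists e0; apply: mem_head].
  by exists [::].
suff grow c : cycle linked c -> uniq c -> {subset c <= E} -> c != [::] ->
    exists c, cycle linked c /\ perm_eq c E.
  have [p [hp up sp]] := cycle_through hb hu he0.
  exact: (grow (e0 :: p)).
move: {2}(size E - size c) (leqnn (size E - size c)) => k.
elim: k c => [|k IH] c hk hc uc sc nc;
  (case: (leqP (size E) (size c)) => hsz;
     first by exists c; split => //; apply: uniq_perm => //; case: (uniq_min_size uc sc hsz)).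
  by move: hk; rewrite leqn0 subn_eq0 leqNgt hsz.
have [f hf hfc] : exists2 f, f \in E & f \notin c.
  apply/hasP; apply: contraTT hsz => /hasPn h; rewrite -leqNgt.
  by apply: uniq_leq_size => // x /h; rewrite negbK.
set F := [seq e <- E | e \notin c].
have hbF : balanced F := balanced_diff hu uc sc hb (cycle_balanced hc).
have [f' hf' /hasP [gc hgc /eqP hsrc]] := cycle_exit hcn hc sc hbF nc (ex_intro2 _ _ f hf hfc).
have [i c' hrot] := rot_to hgc.
have [q [hq uq sq]] := cycle_through hbF (filter_uniq _ hu) hf'.
have hqc x : x \in f' :: q -> x \notin c by move/sq; rewrite mem_filter => /andP [].
apply: (IH (gc :: c' ++ f' :: q)).
- have : size c = (size c').+1 by rewrite -(size_rot i) hrot.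
  by rewrite /= size_cat /=; lia.
- by apply: cycle_cat; rewrite // -hrot rot_cycle.
- rewrite -cat_cons cat_uniq -hrot rot_uniq uc uq andbT.
  by apply/hasPn => x /hqc; rewrite mem_rot.
- move=> x; rewrite -cat_cons mem_cat -hrot mem_rot => /orP [/sc // | /sq].
  by rewrite mem_filter => /andP [].
- by [].
Qed.

End Eulerian.

(** * Words and walks *)

Notation edge n := (linked (src_pat n) dst_pat).

Lemma size_later_factor n t w : w \in later_factors n t -> size w = n.
Proof.
case/mapP => i; rewrite mem_iota => /andP [_ hi] ->.
rewrite size_takel // size_drop; move: hi; rewrite add0n.
(* [size_drop] states [size t] at the type [Equality.sort nat], an atom that
   [lia] would not identify with [size t] at type [nat]. *)
by change (size t) with (@size nat t); lia.
Qed.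

Lemma later_factors_cons n x s : 0 < n -> n <= (size s).+1 ->
  later_factors n (x :: s) = take n (x :: s) :: later_factors n s.
Proof.
move=> hn hs; rewrite /later_factors /= (subSn hs) /=; congr cons.
by rewrite -[1]/(1 + 0) iotaDl -map_comp.
Qed.

Lemma later_factors_map n f t :
  later_factors n (map f t) = map (map f) (later_factors n t).
Proof.
rewrite /later_factors size_map -map_comp; apply: eq_map => i /=.
by rewrite map_take map_drop.
Qed.

Lemma later_factors_walk n t : 0 < n -> sorted (edge n) (map red (later_factors n t)).
Proof.
move=> hn; rewrite sorted_map; apply: (@sub_sorted _ (edge n)) => [w w'|].
  by rewrite /relpre /linked /= src_pat_red dst_pat_red.
apply/(sortedP [::]) => i; rewrite size_map size_iota => hi.
have hi0 := ltnW hi; rewrite !(nth_map 0) ?size_iota ?nth_iota // /linked /dst_pat /src_pat.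
rewrite take_takel ?leq_pred //; case: n hn {hi hi0} => // m _ /=.
by rewrite -[i.+1]/(1 + i) -(drop_drop t 1 i) drop1; case: (drop i t).
Qed.

Lemma head_later_factors n t : n <= size t ->
  head [::] (later_factors n t) = take n t.
Proof. by move=> hn; rewrite /later_factors subSn //= drop0. Qed.

(* [x] must compare with the doubled letters as [k] compares with [r]: it is
   put just above the letter playing the role of [k - 1], or below all of them
   when [k = 1]. *)
Lemma prepend_letter n k r t : is_perm n (k :: r) -> n.-1 <= size t ->
  all (fun x => 0 < x) t -> red (take n.-1 t) = red r ->
  exists2 x, 0 < x & red (x :: take n.-1 (map double t)) = k :: r.
Proof.
move=> hp ht hpos hrr; have /andP [kr _] := is_perm_uniq hp.
have hsr : size r = n.-1 by rewrite -(is_perm_size hp).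
have [_ hcmp] := red_eq_ltn hrr; rewrite size_takel // in hcmp.
have hrng (y : nat) : y \in k :: r -> 0 < y <= n by rewrite (is_perm_mem _ hp).
have hk := hrng k (mem_head _ _).
pose x := if k == 1 then 1 else (nth 0 t (index k.-1 r)).*2.+1.
exists x; first by rewrite /x; case: (k == 1).
rewrite -(red_perm hp) -map_take; apply: red_cons => //.
- by rewrite red_map // => ? ?; rewrite ltn_double.
- rewrite size_map size_takel // => j hj.
  rewrite (nth_map 0) ?nth_take ?size_takel //.
  have hrj : nth 0 r j \in r by rewrite mem_nth ?hsr.
  have hrj_k : nth 0 r j != k by apply: contraNneq kr => <-.
  have := hrng (nth 0 r j); rewrite inE hrj orbT => /(_ isT) hrj_rng.
  rewrite /x; case: eqP => [hk1 | /eqP hk1].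
    have : 0 < nth 0 t j by rewrite (allP hpos) // mem_nth // (leq_trans hj ht).
    lia.
  have hkr : k.-1 \in r.
    have : k.-1 \in k :: r by rewrite (is_perm_mem _ hp); lia.
    by rewrite inE => /orP [/eqP | //]; lia.
  have hi : index k.-1 r < n.-1 by rewrite -hsr index_mem.
  rewrite ltn_Sdouble -(nth_take 0 hi) -(nth_take 0 hj) hcmp // nth_index //.
  by case: ltngtP hrj_k; lia.
- by rewrite /x; apply/mapP => -[y _]; case: (k == 1); lia.
Qed.

Lemma walk_word n p ps : 0 < n -> all (is_perm n) (p :: ps) -> path (edge n) p ps ->
  exists t, [/\ size t = n + size ps, all (fun x => 0 < x) t
              & map red (later_factors n t) = p :: ps].
Proof.
move=> hn; elim: ps p => [|q ps IH] p /=.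
  rewrite andbT => hp _; have hs := is_perm_size hp; exists p; split.
  - by rewrite addn0.
  - by apply/allP => x; rewrite (is_perm_mem _ hp); case/andP.
  - by rewrite /later_factors hs subSnn /= drop0 -hs take_size (red_perm hp).
case/andP => hp hall /andP [hpq hpath].
have [t [hs hpos hmap]] := IH q hall hpath.
have hq : red (take n t) = q.
  have := congr1 (head [::]) hmap; rewrite /= -head_later_factors ?hs ?leq_addr //.
  by case: later_factors.
case: p hp hpq => [|k r] hp hpq; first by move: hn; rewrite -(is_perm_size hp).
have hrr : red (take n.-1 t) = red r.
  by move: hpq; rewrite /linked /src_pat /dst_pat -hq red_take take_takel ?leq_pred // => /eqP.
have [|x hx0 hx] := prepend_letter hp _ hpos hrr; first by rewrite hs; lia.
exists (x :: map double t); split.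
- by rewrite /= size_map hs; lia.
- by rewrite /= hx0; apply/allP => y /mapP [z hz ->]; rewrite double_gt0 (allP hpos z hz).
- rewrite later_factors_cons ?size_map ?hs //=; last by lia.
  rewrite -[n in take n _](prednK hn) /= hx later_factors_map -map_comp -hmap.
  by congr cons; apply: eq_map => w /=; rewrite red_map // => ? ?; rewrite ltn_double.
Qed.

Lemma first_coversE n a b t pi : 0 < n -> is_perm n pi ->
  first_covers n a b t pi =
  (pi == cons_pat a (red (take n.-1 t))) || (pi == cons_pat b (red (take n.-1 t))).
Proof.
move=> hn hpi; rewrite /first_covers; set s := red (take n.-1 t).
have -> : red (behead pi) = dst_pat pi by [].
apply/idP/idP => [/andP [hh /eqP hd] | ].
  by rewrite (perm_cons_patE hn hpi) hd; case/orP: hh => /eqP ->; rewrite eqxx ?orbT.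
by case/orP => /eqP ->; rewrite dst_cons_pat red_idem eqxx /= eqxx ?orbT.
Qed.

Lemma count_behead_le (T : Type) (P Q : pred T) (r : rel T) s :
  (forall x y, r x y -> P y -> Q x) -> sorted r s -> count P (behead s) <= count Q s.
Proof.
move=> hPQ; case: s => //= x s; elim: s x => //= y s IH x /andP [hxy hs].
by have := IH y hs; have := hPQ x y hxy; case: (P y); case: (Q x) => /=; lia.
Qed.

Lemma perm_filter_count (T : eqType) (r s : seq T) (P : pred T) : uniq s ->
  {subset r <= s} -> {in s, forall x, count_mem x r = P x} -> perm_eq r (filter P s).
Proof.
move=> us sub hr; apply/allP => x _ /=.
rewrite (count_uniq_mem _ (filter_uniq P us)) mem_filter.
case: (boolP (x \in s)) => hx; first by rewrite hr ?andbT.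
by rewrite andbF; apply/eqP/count_memPn; apply: contra hx; apply: sub.
Qed.

Lemma walk_count_src_dst n s W : sorted (edge n) W ->
  count (fun p => src_pat n p == s) W <= (count (fun p => dst_pat p == s) W).+1.
Proof.
move=> walk; have hPQ p q : edge n p q -> src_pat n q == s -> dst_pat p == s.
  by move/eqP ->.
have := count_behead_le hPQ walk.
by case: W {walk} => //= p W; case: (_ == s) => /=; lia.
Qed.

Lemma upword_patterns n a b t : upword n a b t ->
  perm_eq (map red (later_factors n t)) [seq pi <- perms n | ~~ first_covers n a b t pi].
Proof.
case=> _ _ _ hwu hcov; apply: perm_filter_count; first exact: perms_uniq.
  move=> _ /mapP [w hw ->]; rewrite mem_perms -(size_later_factor hw).
  by apply: red_is_perm; apply: (allP hwu).
move=> pi; rewrite mem_perms => /hcov; rewrite /cover_count.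
have -> : count (fun w => red w == pi) (later_factors n t) =
  count_mem pi (map red (later_factors n t)) by rewrite [RHS]count_map.
by case: first_covers => /=; lia.
Qed.

(* Along the walk of later factors, leaving [s] requires entering it first. All
   edges out of [s] are used, but two edges into [s] are covered by the first
   factor instead, so one of these must itself leave [s]. *)
Lemma upword_first_loop n a b t s : 2 <= n -> 0 < a < b -> b <= n ->
  upword n a b t -> red (take n.-1 t) = s ->
  src_pat n (cons_pat a s) = s \/ src_pat n (cons_pat b s) = s.
Proof.
move=> hn /andP [ha hab] hb hup hs; have [hsz _ hu _ _] := hup.
have hn0 : 0 < n by apply: ltnW.
have hsp : is_perm n.-1 s by have := red_is_perm hu; rewrite size_takel // hs.
set ea := cons_pat a s; set eb := cons_pat b s.
have pa : ea \in perms n by rewrite mem_perms cons_pat_perm // ha ltnW // (leq_trans hab).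
have pb : eb \in perms n by rewrite mem_perms cons_pat_perm // (ltn_trans ha hab).
have ds e : e \in [:: ea; eb] -> dst_pat e = s.
  by rewrite !inE => /orP [] /eqP ->; rewrite dst_cons_pat (red_perm hsp).
set fc := fun pi => pi \in [:: ea; eb].
have cntW (A : pred (seq nat)) : count A (map red (later_factors n t)) =
    count (fun pi => A pi && ~~ fc pi) (perms n).
  rewrite (permP (upword_patterns hup)) count_filter; apply: eq_in_count => pi.
  by rewrite mem_perms => hpi /=; rewrite first_coversE // hs /fc !inE.
have := walk_count_src_dst s (later_factors_walk t hn0); rewrite !cntW.
have [la | nla] := eqVneq (src_pat n ea) s; first by left.
have [lb | nlb] := eqVneq (src_pat n eb) s; first by right.
have -> : count (fun p => (src_pat n p == s) && ~~ fc p) (perms n) =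
          count (fun p => src_pat n p == s) (perms n).
  apply: eq_count => p /=; case: (eqVneq (src_pat n p) s) => //= hps.
  by rewrite /fc !inE; apply/negP => /orP [] /eqP hp;
    [move: nla | move: nlb]; rewrite -hp hps eqxx.
rewrite (count_src_dst_pat n (fun v => v == s)).
have -> : count (fun p => dst_pat p == s) (perms n) =
    count fc (perms n) + count (fun p => (dst_pat p == s) && ~~ fc p) (perms n).
  elim: (perms n) => //= p ps ->; case hf: (fc p) => /=; first by rewrite ds // eqxx; lia.
  by rewrite andbT; lia.
have hab' : ea != eb by apply/eqP => -[]; lia.
have -> : count fc (perms n) = 2.
  rewrite -size_filter (perm_size (_ : perm_eq _ [:: ea; eb])) //.
  apply: uniq_perm; rewrite ?filter_uniq ?perms_uniq //= ?inE ?hab' // => x.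
  by rewrite mem_filter andb_idr // /fc !inE => /orP [] /eqP ->.
lia.
Qed.

Lemma perms_rem_balanced n l : l \in perms n -> src_pat n l = dst_pat l ->
  balanced (src_pat n) dst_pat (rem l (perms n)).
Proof.
move=> hl hloop v; have := count_src_dst_pat n (fun u => u == v).
by rewrite !(permP (perm_to_rem hl)) /= hloop => /addnI.
Qed.

Lemma perms_rem_connected n l : 2 <= n -> l \in perms n -> src_pat n l = dst_pat l ->
  connected (src_pat n) dst_pat (rem l (perms n)).
Proof.
move=> hn hl hloop A [g1 hg1 hA1] [g2 hg2 hA2].
have hrem g : g \in rem l (perms n) -> g \in perms n.
  by rewrite (mem_rem_uniq _ (perms_uniq n)) => /andP [].
apply/hasP; apply: contraLR hA2 => /hasPn hcut; rewrite negbK.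
have hA : {in perms n, forall g, A (src_pat n g) = A (dst_pat g)}.
  move=> g hg; case: (eqVneq g l) => [-> | hgl]; first by rewrite hloop.
  by apply/eqP; rewrite -[_ == _]negbK hcut // (mem_rem_uniq _ (perms_uniq n)) inE hgl.
have const g : g \in rem l (perms n) -> A (src_pat n g) = A (iota 1 n.-1).
  move/hrem => hg; apply: edge_invariant_const hA _ _ => //.
  by apply: src_pat_perm (ltnW hn) _; rewrite -mem_perms.
by rewrite const // -(const g1).
Qed.

Lemma perms_rem_walk n l e : 2 <= n -> l \in perms n -> e \in perms n -> l != e ->
  src_pat n l = dst_pat l ->
  exists ps, path (edge n) e ps /\ perm_eq (e :: ps) (rem l (perms n)).
Proof.
move=> hn hl he hle hloop.
have [c [hc hcE]] := eulerian_cycle (perms_rem_balanced hl hloop)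
  (rem_uniq l (perms_uniq n)) (perms_rem_connected hn hl hloop).
have hec : e \in c by rewrite (perm_mem hcE) (mem_rem_uniq _ (perms_uniq n)) inE eq_sym hle.
have [i ps hrot] := rot_to hec; exists ps; split.
  by have := rot_cycle i (edge n) c; rewrite hrot hc /= rcons_path => /andP [].
by rewrite -hrot perm_rot.
Qed.

(* Dropping the first letter of the word of the walk [e :: ps] leaves a word
   whose first [n - 1] letters have the pattern [dst_pat e]. *)
Lemma word_of_walk n e ps : 0 < n -> all (is_perm n) (e :: ps) -> path (edge n) e ps ->
  exists t, [/\ n.-1 <= size t, all (fun x => 0 < x) t, uniq (take n.-1 t),
                red (take n.-1 t) = dst_pat e & map red (later_factors n t) = ps].
Proof.
move=> hn hall hpath; have [[|x t] [hs hpos hmap]] := walk_word hn hall hpath.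
  by move: hs; rewrite /=; lia.
have hst : n <= (size t).+1 by move: hs => /= ->; rewrite leq_addr.
move: hmap; rewrite later_factors_cons // -[n in take n _](prednK hn) /= => -[hx hmap].
have hp : is_perm n e by case/andP: hall.
exists t; split => //.
- by move: hs => /=; lia.
- by case/andP: hpos.
- by have := is_perm_uniq hp; rewrite -hx => /map_uniq /andP [].
- by rewrite -hx -[red (take _ t)]/(dst_pat (x :: take n.-1 t)) dst_pat_red.
Qed.

Lemma upword_of_loop n a b s : 2 <= n -> 0 < a < b -> b <= n -> is_perm n.-1 s ->
  src_pat n (cons_pat a s) = s \/ src_pat n (cons_pat b s) = s ->
  exists t, upword n a b t /\ red (take n.-1 t) = s.
Proof.
move=> hn /andP [ha hab] hb hs hloop; have hn0 : 0 < n := ltnW hn.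
set ea := cons_pat a s; set eb := cons_pat b s.
have pa : ea \in perms n by rewrite mem_perms cons_pat_perm // ha ltnW // (leq_trans hab).
have pb : eb \in perms n by rewrite mem_perms cons_pat_perm // (ltn_trans ha hab).
have [da db] : dst_pat ea = s /\ dst_pat eb = s by rewrite !dst_cons_pat (red_perm hs).
have hab' : ea != eb by apply/eqP => -[]; lia.
have [l [e [hl he hle [hll de] hfc]]] : exists l e, [/\ l \in perms n, e \in perms n, l != e,
    src_pat n l = dst_pat l /\ dst_pat e = s &
    forall pi, (pi \in [:: ea; eb]) = (pi \in [:: l; e])].
  case: hloop => [la | lb]; [exists ea, eb | exists eb, ea]; split; rewrite ?da ?db //.
  - by rewrite eq_sym.
  - by move=> pi; rewrite !inE orbC.
have [ps [hpath hps]] := perms_rem_walk hn hl he hle hll.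
have hall : all (is_perm n) (e :: ps).
  by apply/allP => p; rewrite (perm_mem hps) -mem_perms => /mem_rem.
have [t [hsz hpos hu ht hmap]] := word_of_walk hn0 hall hpath.
exists t; rewrite ht de; split => //; split => //.
  apply/allP => w hw.
  have /(allP hall)/is_perm_uniq/map_uniq // : red w \in e :: ps.
  by rewrite inE -hmap map_f ?orbT.
move=> pi hpi; rewrite /cover_count first_coversE // ht de -/ea -/eb.
have -> : count (fun w => red w == pi) (later_factors n t) = count_mem pi ps.
  by rewrite -hmap [RHS]count_map.
have := count_uniq_mem pi (perms_uniq n); rewrite mem_perms hpi.
rewrite (permP (perm_to_rem hl)) /= -(permP hps) /=.
have -> : (pi == ea) || (pi == eb) = (pi == l) || (pi == e) by have := hfc pi; rewrite !inE.
by rewrite ![_ == pi]eq_sym; case: (eqVneq pi l) => [-> | _]; rewrite ?(negbTE hle) add0n.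
Qed.

Theorem theorem5 (n a b : nat) (sigma : seq nat) :
  2 <= n -> 1 <= a -> a < b -> b <= n -> is_perm n.-1 sigma ->
  (exists t : seq nat, upword n a b t /\ red (take n.-1 t) = sigma) <->
  ((a = 1 /\ sigma = iota 1 n.-1) \/ (b = n /\ sigma = rev (iota 1 n.-1))).
Proof.
move=> hn ha hab hb hs.
have hab' : 0 < a < b by rewrite ha hab.
have ha' : 0 < a <= n by rewrite ha ltnW // (leq_trans hab).
have hb' : 0 < b <= n by rewrite hb andbT (leq_trans ha (ltnW hab)).
split.
  case=> t [hup ht]; case: (upword_first_loop hn hab' hb hup ht); rewrite cons_pat_loopE //.
    by case=> -[ea es]; [left | move: hab hb; lia].
  by case=> -[eb es]; [move: ha hab; lia | right].
move=> h; apply: upword_of_loop => //.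
by case: h => h; [left | right]; rewrite cons_pat_loopE //; [left | right].
Qed.
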